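(* Let $\mu$ and $\lambda$ be constants, and let $r_\mu:=1/\sqrt{-\mu}$ if $\mu<0$ and $r_\mu:=+\infty$ if $\mu\ge 0$. On the ball $\mathbb{B}^n(r_\mu)=\{x\in\mathbb{R}^n:|x|<r_\mu\}$ consider the Riemannian metric $$\bar\alpha=\frac{\sqrt{(1+\mu|x|^2)|y|^2-\mu\langle x,y\rangle^2}}{(1+\mu|x|^2)^{3/4}}$$ and the $1$-form $$\bar\beta=\frac{\lambda\langle x,y\rangle}{(1+\mu|x|^2)^{5/4}}.$$ Then $\bar\alpha$ is dually flat on $\mathbb{B}^n(r_\mu)$, and $\bar\beta$ is dually related with respect to $\bar\alpha$.
   Context: $|\cdot|$ and $\langle\cdot,\cdot\rangle$ are the Euclidean norm and inner product; standard coordinates $x=(x^i)$, $y=(y^i)$ are used. A Riemannian metric $\alpha=\sqrt{a_{ij}(x)y^iy^j}$ on an open set $U\subseteq\mathbb{R}^n$ is dually flat if $[\alpha^2]_{x^ky^l}y^k-2[\alpha^2]_{x^l}=0$; equivalently its spray coefficients $G^i=\frac12\Gamma^i{}_{jk}y^jy^k$ satisfy $G^i=2\theta\,y^i+\alpha^2\theta^i$ for some $1$-form $\theta=\theta_iy^i$ on $U$, where $\theta^i:=a^{ij}\theta_j$ (this $\theta$ is uniquely determined by $G^i$). Given such a dually flat $\alpha$ with this $\theta$, a $1$-form $\beta=b_iy^i$ on $U$ is called dually related with respect to $\alpha$ if $b_{i|j}=2\theta_ib_j+c(x)a_{ij}$ for some scalar function $c(x)$ on $U$, where $b_{i|j}$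 denotes the covariant derivative of $\beta$ with respect to $\alpha$. *)

From HB Require Import structures.
From mathcomp Require Import all_boot all_order all_algebra.
From mathcomp Require Import all_classical all_reals all_analysis.
Import Order.TTheory GRing.Theory Num.Theory.
Import numFieldNormedType.Exports.
Local Open Scope ring_scope.

Definition dotp {R : realType} {n : nat} (x y : 'rV[R]_n) : R :=
  \sum_(i < n) x 0 i * y 0 i.
Definition sqn {R : realType} {n : nat} (x : 'rV[R]_n) : R := dotp x x.

Definition evec {R : realType} {n : nat} (k : 'I_n) : 'rV[R]_n := delta_mx 0 k.
Definition pd {R : realType} {n : nat} (f : 'rV[R]_n -> R) (k : 'I_n)
  (x : 'rV[R]_n) : R := 'D_(evec k) f x.

(* A Riemannian metric alpha = sqrt(a_ij(x) y^i y^j) is given by its matrix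
   a : x |-> (a_ij(x)); sqform a x y = alpha^2 = a_ij(x) y^i y^j. *)
Definition sqform {R : realType} {n : nat} (a : 'rV[R]_n -> 'M[R]_n)
  (x y : 'rV[R]_n) : R :=
  \sum_(i < n) \sum_(j < n) a x i j * y 0 i * y 0 j.

Definition riemannian_on {R : realType} {n : nat} (U : set 'rV[R]_n)
  (a : 'rV[R]_n -> 'M[R]_n) : Prop :=
  forall x, U x ->
    (forall i j, a x i j = a x j i) /\
    (forall y : 'rV[R]_n, y != 0 -> 0 < sqform a x y).

Definition dually_flat {R : realType} {n : nat} (U : set 'rV[R]_n)
  (a : 'rV[R]_n -> 'M[R]_n) : Prop :=
  forall x, U x -> forall (y : 'rV[R]_n) (l : 'I_n),
    \sum_(k < n) pd (fun y' => pd (fun x' => sqform a x' y') k x) l y * y 0 k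
    - 2 * pd (fun x' => sqform a x' y) l x = 0.

Definition ainv {R : realType} {n : nat} (a : 'rV[R]_n -> 'M[R]_n)
  (x : 'rV[R]_n) : 'M[R]_n := invmx (a x).

Definition christ {R : realType} {n : nat} (a : 'rV[R]_n -> 'M[R]_n)
  (x : 'rV[R]_n) (i j k : 'I_n) : R :=
  2^-1 * \sum_(l < n) ainv a x i l *
    (pd (fun z => a z l k) j x + pd (fun z => a z l j) k x
     - pd (fun z => a z j k) l x).

Definition spray {R : realType} {n : nat} (a : 'rV[R]_n -> 'M[R]_n)
  (x y : 'rV[R]_n) (i : 'I_n) : R :=
  2^-1 * \sum_(j < n) \sum_(k < n) christ a x i j k * y 0 j * y 0 k.

Definition raise {R : realType} {n : nat} (a : 'rV[R]_n -> 'M[R]_n)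
  (th : 'rV[R]_n -> 'rV[R]_n) (x : 'rV[R]_n) (i : 'I_n) : R :=
  \sum_(j < n) ainv a x i j * th x 0 j.

Definition covd {R : realType} {n : nat} (a : 'rV[R]_n -> 'M[R]_n)
  (b : 'rV[R]_n -> 'rV[R]_n) (x : 'rV[R]_n) (i j : 'I_n) : R :=
  pd (fun z => b z 0 i) j x - \sum_(k < n) b x 0 k * christ a x k i j.

(* beta is dually related w.r.t. alpha on U: with theta the (unique) 1-form
   such that G^i = 2 theta y^i + alpha^2 theta^i, there is c(x) with
   b_{i|j} = 2 theta_i b_j + c(x) a_ij. *)
Definition dually_related {R : realType} {n : nat} (U : set 'rV[R]_n)
  (a : 'rV[R]_n -> 'M[R]_n) (b : 'rV[R]_n -> 'rV[R]_n) : Prop :=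
  exists (th : 'rV[R]_n -> 'rV[R]_n) (c : 'rV[R]_n -> R),
    (forall x, U x -> forall (y : 'rV[R]_n) (i : 'I_n),
        spray a x y i = 2 * dotp (th x) y * y 0 i + sqform a x y * raise a th x i) /\
    (forall x, U x -> forall i j : 'I_n,
        covd a b x i j = 2 * th x 0 i * b x 0 j + c x * a x i j).

Definition ball_mu {R : realType} {n : nat} (mu : R) : set 'rV[R]_n :=
  [set x | (0 <= mu) \/ (mu < 0 /\ Num.sqrt (sqn x) < 1 / Num.sqrt (- mu))].

Definition alpha_bar {R : realType} {n : nat} (mu : R) (x y : 'rV[R]_n) : R :=
  Num.sqrt ((1 + mu * sqn x) * sqn y - mu * (dotp x y) ^+ 2)
  / powR (1 + mu * sqn x) (3 / 4).

(* Its matrix: alpha_bar^2 = a_ij y^i y^j with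
   a_ij = ((1 + mu|x|^2) delta_ij - mu x_i x_j) / (1 + mu|x|^2)^{3/2}. *)
Definition abar {R : realType} {n : nat} (mu : R) (x : 'rV[R]_n) : 'M[R]_n :=
  \matrix_(i, j) (((1 + mu * sqn x) * (i == j)%:R - mu * x 0 i * x 0 j)
                  / powR (1 + mu * sqn x) (3 / 2)).

Definition bbar {R : realType} {n : nat} (lam mu : R) (x : 'rV[R]_n) : 'rV[R]_n :=
  (lam / powR (1 + mu * sqn x) (5 / 4)) *: x.

From HB Require Import structures.
From mathcomp Require Import all_boot all_order all_algebra.
From mathcomp Require Import all_classical all_reals all_analysis.
From mathcomp Require Import ring lra.
Import Order.TTheory GRing.Theory Num.Theory.
Import numFieldNormedType.Exports.
Local Open Scope ring_scope.

(* With P = 1 + mu |x|^2 the metric is a_ij = (P delta_ij - mu x_i x_j) / P^(3/2), so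
   alpha^2 = (P |y|^2 - mu <x,y>^2) / P^(3/2), which is positive on the ball by
   Cauchy-Schwarz, and the inverse metric is a^ij = P^(1/2) (delta^ij + mu x^i x^j).
   Everything else is an explicit computation with these closed forms: dual flatness
   is checked on alpha^2 directly, and the Christoffel symbols
     Gamma^i_jk = - (mu delta_jk x^i + mu/P (delta^i_k x_j + delta^i_j x_k)
                     - mu^2/P x^i x_j x_k) / 2
   give G^i = 2 theta y^i + alpha^2 theta^i and b_i|j = 2 theta_i b_j + c a_ij with
   theta = - mu <x,y> / (4P) and c = lambda (P + 1) / (2 P^(3/4)). *)

Section DirectionalDerivative.
Context {R : realType}.

Lemma is_derive_line (V W : normedModType R) (f : V -> W) (x v : V) (d : W) :
  is_derive x v f d <-> is_derive (0 : R) 1 (fun t => f (t *: v + x)) d.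
Proof.
have E : (fun h : R => h^-1 *: ((f \o shift x) (h *: v) - f x)) =
  (fun h : R => h^-1 *: (((fun t => f (t *: v + x)) \o shift 0) (h *: 1)
                         - (fun t => f (t *: v + x)) 0)).
  by apply/funext => h /=; rewrite addr0 scale0r add0r [_%:A]mulr1.
split=> -[fx dfx]; split.
- exact: (derivable1P f x v).1.
- by rewrite -dfx /derive -E.
- exact: (derivable1P f x v).2.
- by rewrite -dfx /derive E.
Qed.

Lemma is_derive_powR_comp {V : normedModType R} {g : V -> R} {x v : V} {dg : R} (r : R) :
  0 < g x -> is_derive x v g dg ->
  is_derive x v (fun z => powR (g z) r) (r * powR (g x) (r - 1) * dg).
Proof.
move=> gx /is_derive_line dg_line; apply/is_derive_line.
have gx0 : 0 < g (0 *: v + x) by rewrite scale0r add0r.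
have := is_derive1_comp (is_derive1_powR r gx0) dg_line.
by rewrite /= scale0r add0r.
Qed.

Lemma scaleRE (a b : R) : a *: b = a * b. Proof. by []. Qed.

End DirectionalDerivative.

Lemma powRB1 (R : realType) (p r : R) : 0 < p -> powR p (r - 1) = powR p r / p.
Proof. by move=> p0; rewrite powRB ?powRr1 ?ltW //; apply/implyP => _; rewrite gt_eqF. Qed.

Section KroneckerSums.
Context {T : pzSemiRingType} {n : nat}.

Lemma sum_delta_l (k : 'I_n) (F : 'I_n -> T) : \sum_(l < n) (l == k)%:R * F l = F k.
Proof.
rewrite (bigD1 k) //= eqxx mul1r big1 ?addr0 // => l /negbTE ->.
by rewrite mul0r.
Qed.

Lemma sum_delta_r (k : 'I_n) (F : 'I_n -> T) : \sum_(l < n) (k == l)%:R * F l = F k.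
Proof. by rewrite -(sum_delta_l k F); apply: eq_bigr => l _; rewrite eq_sym. Qed.

End KroneckerSums.

Section EuclideanSpace.
Context {R : realType} {n : nat}.
Implicit Types (x y z v : 'rV[R]_n) (i j k l : 'I_n).

Lemma dotpC x y : dotp x y = dotp y x.
Proof. by apply: eq_bigr => i _; rewrite mulrC. Qed.

Lemma dotpDl x y z : dotp (x + y) z = dotp x z + dotp y z.
Proof. by rewrite /dotp -big_split; apply: eq_bigr => i _; rewrite !mxE mulrDl. Qed.

Lemma dotpZl (a : R) x z : dotp (a *: x) z = a * dotp x z.
Proof. by rewrite /dotp mulr_sumr; apply: eq_bigr => i _; rewrite !mxE mulrA. Qed.

Lemma dotpDr x y z : dotp z (x + y) = dotp z x + dotp z y.
Proof. by rewrite !(dotpC z) dotpDl. Qed.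

Lemma dotpZr (a : R) x z : dotp z (a *: x) = a * dotp z x.
Proof. by rewrite !(dotpC z) dotpZl. Qed.

Lemma evecE k l : (evec k : 'rV[R]_n) 0 l = (l == k)%:R.
Proof. by rewrite /evec mxE eqxx. Qed.

Lemma dotp_evecr x k : dotp x (evec k) = x 0 k.
Proof.
rewrite /dotp -(sum_delta_l k (fun l => x 0 l)).
by apply: eq_bigr => l _; rewrite evecE mulrC.
Qed.

Lemma dotp_evecl x k : dotp (evec k) x = x 0 k.
Proof. by rewrite dotpC dotp_evecr. Qed.

Lemma sqn_ge0 x : 0 <= sqn x.
Proof. by apply: sumr_ge0 => i _; rewrite -expr2 sqr_ge0. Qed.

Lemma sqn_gt0 y : y != 0 -> 0 < sqn y.
Proof.
move=> y0.
have [i yi] : exists i, y 0 i != 0.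
  apply/existsP; apply: contraR y0 => /existsPn yi0; apply/eqP/matrixP => a b.
  by rewrite (ord1 a) mxE; apply/eqP; move: (yi0 b); rewrite negbK.
rewrite /sqn /dotp (bigD1 i) //=.
apply: ltr_pwDl; first by rewrite -expr2 lt_def sqr_ge0 andbT sqrf_eq0 yi.
by apply: sumr_ge0 => j _; rewrite -expr2 sqr_ge0.
Qed.

Lemma cauchy_schwarz x y : dotp x y ^+ 2 <= sqn x * sqn y.
Proof.
have [->|y0] := eqVneq y 0.
  have -> : dotp x 0 = 0 by rewrite /dotp big1 // => i _; rewrite mxE mulr0.
  by rewrite expr0n /= mulr_ge0 // sqn_ge0.
have sqn_y := sqn_gt0 y y0.
have := sqn_ge0 (sqn y *: x + (- dotp x y) *: y).
move: sqn_y; rewrite /sqn !(dotpDl, dotpDr, dotpZl, dotpZr) (dotpC y x).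
set a := dotp x x; set b := dotp y y; set c := dotp x y => b_gt0 H.
have : 0 <= b * (a * b - c ^+ 2) by move: H; congr (_ <= _); ring.
by rewrite pmulr_rge0 // subr_ge0 mulrC.
Qed.

Lemma pdE (f : 'rV[R]_n -> R) k x d : is_derive x (evec k) f d -> pd f k x = d.
Proof. by move=> df; rewrite /pd derive_val. Qed.

#[global] Instance is_derive_coord x v i :
  is_derive x v (fun z : 'rV[R]_n => z 0 i) (v 0 i).
Proof.
apply/is_derive_line.
have -> : (fun t : R => (t *: v + x) 0 i) = (fun t => t * v 0 i + x 0 i).
  by apply/funext => t; rewrite !mxE.
apply: is_derive_eq.
by rewrite scaler0 add0r addr0 [_%:A]mulr1.
Qed.

#[global] Instance is_derive_dotpl x v y :
  is_derive x v (fun z => dotp z y) (dotp v y).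
Proof.
apply/is_derive_line.
have -> : (fun t : R => dotp (t *: v + x) y) = (fun t => t * dotp v y + dotp x y).
  by apply/funext => t; rewrite dotpDl dotpZl.
apply: is_derive_eq.
by rewrite scaler0 add0r addr0 [_%:A]mulr1.
Qed.

#[global] Instance is_derive_dotpr x v y :
  is_derive x v (fun z => dotp y z) (dotp y v).
Proof.
under eq_fun do rewrite dotpC.
by rewrite dotpC; apply: is_derive_dotpl.
Qed.

#[global] Instance is_derive_sqn x v :
  is_derive x v (fun z => sqn z) (2 * dotp x v).
Proof.
apply/is_derive_line.
have -> : (fun t : R => sqn (t *: v + x)) =
          (fun t => t ^+ 2 * sqn v + t * (2 * dotp x v) + sqn x).
  apply/funext => t; rewrite /sqn !(dotpDl, dotpDr, dotpZl, dotpZr) (dotpC v x); ring.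
apply: is_derive_eq.
by rewrite !(scale0r, scaler0, addr0, add0r, mulr0) [_%:A]mulr1.
Qed.

End EuclideanSpace.

Section BarMetric.
Variables (R : realType) (n : nat) (mu : R).
Implicit Types (x y : 'rV[R]_n) (i j k l : 'I_n).

Definition pmu x : R := 1 + mu * sqn x.

Lemma pmu_gt0 x : ball_mu mu x -> 0 < pmu x.
Proof.
have sqn_x := sqn_ge0 x; rewrite /pmu; case=> [mu_ge0|[mu_lt0 x_in]].
  have : 0 <= mu * sqn x by apply: mulr_ge0. lra.
have nmu_gt0 : 0 < - mu by rewrite oppr_gt0.
move: x_in; rewrite ltr_pdivlMr ?sqrtr_gt0 // -sqrtrM // -sqrtr1 ltr_sqrt ?ltr01 //.
by rewrite sqrtr1 mulrN mulrC => ?; lra.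
Qed.

#[local] Instance is_derive_pmu x v : is_derive x v pmu (mu * (2 * dotp x v)).
Proof. by rewrite /pmu; apply: is_derive_eq; rewrite add0r. Qed.

Lemma sqform_abar x y :
  sqform (abar mu) x y = (pmu x * sqn y - mu * dotp x y ^+ 2) / powR (pmu x) (3/2).
Proof.
rewrite /sqform; set A := powR _ _.
rewrite (eq_bigr (fun i => \sum_(j < n) ((pmu x / A) * ((i == j)%:R * (y 0 i * y 0 j))
   + (- mu / A) * ((x 0 i * y 0 i) * (x 0 j * y 0 j))))); last first.
  by move=> i _; apply: eq_bigr => j _; rewrite !mxE /pmu; ring.
under eq_bigr do rewrite big_split -!mulr_sumr sum_delta_r.
rewrite big_split /= -!mulr_sumr -mulr_suml.
by rewrite /sqn /dotp; ring.
Qed.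

Lemma alpha_barE x : ball_mu mu x -> forall y,
  alpha_bar mu x y = Num.sqrt (sqform (abar mu) x y).
Proof.
move=> /pmu_gt0 p_gt0 y; rewrite sqform_abar /alpha_bar -/(pmu x).
have -> : powR (pmu x) (3/2) = powR (pmu x) (3/4) ^+ 2.
  by rewrite -powR_mulrn ?powR_ge0 // -powRrM; congr powR; field.
rewrite [in RHS]mulrC sqrtrM ?invr_ge0 ?sqr_ge0 // sqrtrV ?sqr_ge0 //.
by rewrite sqrtr_sqr gtr0_norm ?powR_gt0 // mulrC.
Qed.

Lemma abar_riemannian : riemannian_on (@ball_mu R n mu) (abar mu).
Proof.
move=> x /pmu_gt0 p_gt0; split.
  by move=> i j; rewrite !mxE eq_sym [_ * x 0 j * _]mulrAC.
move=> y y0; rewrite sqform_abar; apply: divr_gt0; last exact: powR_gt0.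
have sqn_y := sqn_gt0 y y0; have cs := cauchy_schwarz x y.
have sqn_x := sqn_ge0 x; have dotp2 := sqr_ge0 (dotp x y).
move: p_gt0; rewrite /pmu => p_gt0.
(* for mu >= 0 use Cauchy-Schwarz, for mu < 0 use 1 + mu |x|^2 > 0 *)
have [mu_ge0|mu_lt0] := leP 0 mu.
- have : 0 <= mu * (sqn x * sqn y - dotp x y ^+ 2) by apply: mulr_ge0; lra.
  by nra.
- have : 0 <= - mu * dotp x y ^+ 2 by apply: mulr_ge0; lra.
  by nra.
Qed.

Lemma pd_abar x j l k : 0 < pmu x ->
  pd (fun z => abar mu z l k) j x =
  (2 * mu * x 0 j * (l == k)%:R - mu * ((l == j)%:R * x 0 k + x 0 l * (k == j)%:R))
    / powR (pmu x) (3/2)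
  - 3 * mu * x 0 j * (pmu x * (l == k)%:R - mu * x 0 l * x 0 k)
    / (powR (pmu x) (3/2) * pmu x).
Proof.
move=> p_gt0.
have -> : (fun z => abar mu z l k) =
    (fun z => (pmu z * (l == k)%:R - mu * z 0 l * z 0 k) * powR (pmu z) (- (3/2))).
  by apply/funext => z; rewrite mxE powRN.
have dpow := is_derive_powR_comp (- (3/2)) p_gt0 (is_derive_pmu x (evec j)).
apply: pdE; apply: is_derive_eq.
rewrite !evecE !dotp_evecr powRB1 // !powRN !scaleRE.
by field; rewrite !gt_eqF ?powR_gt0.
Qed.

Lemma pd_sqform_abar x y k : 0 < pmu x ->
  pd (fun z => sqform (abar mu) z y) k x =
  2 * mu * (x 0 k * sqn y - dotp x y * y 0 k) / powR (pmu x) (3/2)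
  - 3 * mu * x 0 k * (pmu x * sqn y - mu * dotp x y ^+ 2) / (powR (pmu x) (3/2) * pmu x).
Proof.
move=> p_gt0.
have -> : (fun z => sqform (abar mu) z y) =
    (fun z => (pmu z * sqn y - mu * dotp z y ^+ 2) * powR (pmu z) (- (3/2))).
  by apply/funext => z; rewrite sqform_abar powRN.
have dpow := is_derive_powR_comp (- (3/2)) p_gt0 (is_derive_pmu x (evec k)).
apply: pdE; apply: is_derive_eq.
rewrite !dotp_evecr !dotp_evecl powRB1 // !powRN !scaleRE.
by field; rewrite !gt_eqF ?powR_gt0.
Qed.

Lemma pd2_sqform_abar x y k l : 0 < pmu x ->
  pd (fun w => pd (fun z => sqform (abar mu) z w) k x) l y =
  2 * mu * (2 * x 0 k * y 0 l - x 0 l * y 0 k - dotp x y * (k == l)%:R)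
    / powR (pmu x) (3/2)
  - 3 * mu * x 0 k * (2 * pmu x * y 0 l - 2 * mu * dotp x y * x 0 l)
    / (powR (pmu x) (3/2) * pmu x).
Proof.
move=> p_gt0; under eq_fun do rewrite pd_sqform_abar //.
apply: pdE; apply: is_derive_eq.
rewrite !dotp_evecr !evecE !scaleRE.
by field; rewrite !gt_eqF ?powR_gt0.
Qed.

Lemma abar_dually_flat : dually_flat (@ball_mu R n mu) (abar mu).
Proof.
move=> x /pmu_gt0 p_gt0 y l; rewrite pd_sqform_abar //.
set A := powR (pmu x) (3/2); set P := pmu x; set s := dotp x y.
rewrite (eq_bigr (fun k =>
   ((- 2 * mu * P * y 0 l + 6 * mu ^+ 2 * s * x 0 l) / (A * P))
     * (x 0 k * y 0 k)
   + (- 2 * mu * x 0 l / A) * (y 0 k * y 0 k)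
   + (- 2 * mu * s / A) * ((k == l)%:R * y 0 k))); last first.
  move=> k _; rewrite pd2_sqform_abar // -/A -/P -/s.
  by field; rewrite /A /P !gt_eqF ?powR_gt0.
rewrite !big_split /= -!mulr_sumr sum_delta_l -/(dotp x y) -/(dotp y y) -/(sqn y) -/s.
by field; rewrite /A /P !gt_eqF ?powR_gt0.
Qed.

Definition abar_inv x : 'M[R]_n :=
  \matrix_(i, j) (powR (pmu x) (3/2) / pmu x * ((i == j)%:R + mu * x 0 i * x 0 j)).

Lemma abar_mulmx_inv x : 0 < pmu x -> abar mu x *m abar_inv x = 1%:M.
Proof.
move=> p_gt0; apply/matrixP => i j; rewrite !mxE.
set A := powR (pmu x) (3/2); set P := pmu x.
rewrite (eq_bigr (fun l => (i == l)%:R * (l == j)%:R + (mu * x 0 j) * ((i == l)%:R * x 0 l)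
   + (- mu * x 0 i / P) * ((l == j)%:R * x 0 l)
   + (- mu ^+ 2 * x 0 i * x 0 j / P) * (x 0 l * x 0 l))); last first.
  move=> l _; rewrite !mxE /P /pmu.
  by field; rewrite -/(pmu x) /A !gt_eqF ?powR_gt0.
rewrite !big_split /= -!mulr_sumr !sum_delta_r sum_delta_l -/(dotp x x) -/(sqn x).
have -> : P = 1 + mu * sqn x by [].
by field; rewrite -/P gt_eqF.
Qed.

Lemma ainv_abar x : 0 < pmu x -> ainv (abar mu) x = abar_inv x.
Proof.
move=> /abar_mulmx_inv a_inv; have [a_unit _] := mulmx1_unit a_inv.
by rewrite /ainv -[invmx _]mulmx1 -a_inv mulmxA mulVmx // mul1mx.
Qed.

Lemma christ_abar x i j k : 0 < pmu x ->
  christ (abar mu) x i j k =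
  2^-1 * (- mu * (j == k)%:R * x 0 i
          - mu / pmu x * ((i == k)%:R * x 0 j + (i == j)%:R * x 0 k)
          + mu ^+ 2 / pmu x * x 0 i * x 0 j * x 0 k).
Proof.
move=> p_gt0; rewrite /christ ainv_abar //.
set A := powR (pmu x) (3/2); set P := pmu x.
pose G := A / P.
pose al := - mu * x 0 j / A.
pose be := - mu * x 0 k / A.
pose ga := - mu * (j == k)%:R / A + 3 * mu ^+ 2 * x 0 j * x 0 k / (A * P).
rewrite (eq_bigr (fun l => (G * al) * ((i == l)%:R * (l == k)%:R)
   + (G * be) * ((i == l)%:R * (l == j)%:R)
   + (G * ga) * ((i == l)%:R * x 0 l)
   + (G * mu * x 0 i * al) * ((l == k)%:R * x 0 l)
   + (G * mu * x 0 i * be) * ((l == j)%:R * x 0 l)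
   + (G * mu * x 0 i * ga) * (x 0 l * x 0 l))); last first.
  move=> l _; rewrite mxE !pd_abar // -/A -/P.
  rewrite [k == j]eq_sym [j == l]eq_sym [k == l]eq_sym /G /al /be /ga /P /pmu.
  by field; rewrite -/(pmu x) /A !gt_eqF ?powR_gt0.
rewrite !big_split /= -!mulr_sumr !sum_delta_r !sum_delta_l -/(dotp x x) -/(sqn x).
rewrite /G /al /be /ga /P /pmu.
by field; rewrite -/(pmu x) /A !gt_eqF ?powR_gt0.
Qed.

Definition theta_bar x : 'rV[R]_n := (- mu / (4 * pmu x)) *: x.

Lemma spray_abar x y i : 0 < pmu x ->
  spray (abar mu) x y i =
  2 * dotp (theta_bar x) y * y 0 i + sqform (abar mu) x y * raise (abar mu) theta_bar x i.
Proof.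
move=> p_gt0; set P := pmu x.
rewrite /spray (eq_bigr (fun j => \sum_(k < n)
   ((2^-1 * (- mu * x 0 i)) * ((j == k)%:R * (y 0 j * y 0 k))
   + (2^-1 * (- mu / P)) * ((i == k)%:R * (x 0 j * y 0 j * y 0 k))
   + (2^-1 * (- mu / P)) * ((i == j)%:R * (y 0 j * (x 0 k * y 0 k)))
   + (2^-1 * (mu ^+ 2 / P * x 0 i)) * (x 0 j * y 0 j * (x 0 k * y 0 k))))); last first.
  move=> j _; apply: eq_bigr => k _; rewrite christ_abar // /P /pmu.
  by field; rewrite -/(pmu x) gt_eqF.
under eq_bigr do rewrite !big_split /= -!mulr_sumr !sum_delta_r.
rewrite !big_split /= -!mulr_sumr.
rewrite sum_delta_r -!mulr_suml -/(dotp x y) -/(dotp y y) -/(sqn y).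
rewrite sqform_abar /raise ainv_abar // -/P.
rewrite (eq_bigr (fun j => (powR P (3/2) / P * (- mu / (4 * P))) * ((i == j)%:R * x 0 j)
   + (powR P (3/2) / P * (- mu / (4 * P)) * mu * x 0 i) * (x 0 j * x 0 j))); last first.
  by move=> j _; rewrite !mxE; ring.
rewrite big_split /= -!mulr_sumr sum_delta_r -/(dotp x x) -/(sqn x) /theta_bar dotpZl /P /pmu.
by field; rewrite -/(pmu x) !gt_eqF ?powR_gt0.
Qed.

Variable lam : R.

Lemma pd_bbar x i j : 0 < pmu x ->
  pd (fun z => bbar lam mu z 0 i) j x =
  lam * (i == j)%:R / powR (pmu x) (5/4)
  - 5 * lam * mu * x 0 i * x 0 j / (2 * powR (pmu x) (5/4) * pmu x).
Proof.
move=> p_gt0.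
have -> : (fun z => bbar lam mu z 0 i) =
    (fun z => lam * powR (pmu z) (- (5/4)) * z 0 i).
  by apply/funext => z; rewrite mxE powRN.
have dpow := is_derive_powR_comp (- (5/4)) p_gt0 (is_derive_pmu x (evec j)).
apply: pdE; apply: is_derive_eq.
rewrite !evecE dotp_evecr powRB1 // !powRN !scaleRE.
by field; rewrite !gt_eqF ?powR_gt0.
Qed.

Definition c_bar x : R :=
  lam * (pmu x + 1) * powR (pmu x) (3/2) / (2 * pmu x * powR (pmu x) (5/4)).

Lemma covd_abar x i j : 0 < pmu x ->
  covd (abar mu) (bbar lam mu) x i j =
  2 * theta_bar x 0 i * bbar lam mu x 0 j + c_bar x * abar mu x i j.
Proof.
move=> p_gt0; rewrite /covd pd_bbar //.
set B := powR (pmu x) (5/4); set P := pmu x.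
rewrite (eq_bigr (fun k =>
   (lam / B * 2^-1 * (- mu * (i == j)%:R + mu ^+ 2 / P * x 0 i * x 0 j)) * (x 0 k * x 0 k)
   + (lam / B * 2^-1 * (- mu / P * x 0 i)) * ((k == j)%:R * x 0 k)
   + (lam / B * 2^-1 * (- mu / P * x 0 j)) * ((k == i)%:R * x 0 k))); last first.
  move=> k _; rewrite christ_abar // mxE -/B -/P.
  by field; rewrite /B /P !gt_eqF ?powR_gt0.
rewrite !big_split /= -!mulr_sumr !sum_delta_l -/(dotp x x) -/(sqn x).
rewrite /theta_bar /c_bar !mxE -/B -/P eq_sym.
have -> : P = 1 + mu * sqn x by [].
by field; rewrite -/P /B !gt_eqF ?powR_gt0.
Qed.

Lemma bbar_dually_related : dually_related (@ball_mu R n mu) (abar mu) (bbar lam mu).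
Proof.
exists theta_bar, c_bar; split=> x /pmu_gt0 p_gt0.
- by move=> y i; rewrite spray_abar.
- by move=> i j; rewrite covd_abar.
Qed.

End BarMetric.

Theorem mainTheorem4 (R : realType) (n : nat) (mu lam : R) :
  (forall x : 'rV[R]_n, ball_mu mu x -> forall y : 'rV[R]_n,
      alpha_bar mu x y = Num.sqrt (sqform (abar mu) x y)) /\
  riemannian_on (@ball_mu R n mu) (abar mu) /\
  dually_flat (@ball_mu R n mu) (abar mu) /\
  dually_related (@ball_mu R n mu) (abar mu) (bbar lam mu).
Proof.
split; first exact: alpha_barE.
split; first exact: abar_riemannian.
split; first exact: abar_dually_flat.
exact: bbar_dually_related.
Qed.
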